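(* Let $R$ be a t-unital ring, $\widetilde R=\mathbb Z\oplus R$ its unitalization, and $N$ a left null-module over $R$. Then (a) $R\otimes_R N=R\otimes_{\widetilde R}N=0$ and $\mathrm{Tor}^{\widetilde R}_1(R,N)=0$; (b) $\mathrm{Hom}_R(R,N)=\mathrm{Hom}_{\widetilde R}(R,N)=0$ and $\mathrm{Ext}^1_{\widetilde R}(R,N)=0$.
   Context: Rings are associative, not necessarily unital. The unitalization $\widetilde R=\mathbb Z\oplus R$ has multiplication $(n+r)(n'+r')=nn'+(nr'+n'r+rr')$, so that $R$ is a two-sided ideal; nonunital $R$-modules are the same as unital $\widetilde R$-modules, and Tor and Ext are computed over the unital ring $\widetilde R$. $R$ is t-unital if the multiplication map $R\otimes_R R\to R$ is an isomorphism. A left $R$-module $N$ is a null-module if $rn=0$ for all $r\in R$, $n\in N$. *)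

From HB Require Import structures.
From mathcomp Require Import all_boot all_order all_algebra.
Set Implicit Arguments. Unset Strict Implicit. Unset Printing Implicit Defensive.
Import Order.TTheory GRing.Theory Num.Theory.
Local Open Scope ring_scope.

Definition nu_ring_axioms (R : zmodType) (mul : R -> R -> R) : Prop :=
  [/\ (forall x y z, mul x (mul y z) = mul (mul x y) z),
      (forall x y z, mul (x + y) z = mul x z + mul y z) &
      (forall x y z, mul x (y + z) = mul x y + mul x z)].

Definition lmod_axioms (R : zmodType) (mul : R -> R -> R)
  (N : zmodType) (act : R -> N -> N) : Prop :=
  [/\ (forall r s x, act (mul r s) x = act r (act s x)),
      (forall r s x, act (r + s) x = act r x + act s x) &
      (forall r x y, act r (x + y) = act r x + act r y)].

Definition null_module (R N : zmodType) (act : R -> N -> N) : Prop :=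
  forall r x, act r x = 0.

Definition Rt (R : zmodType) := (int * R)%type.

Definition rt_mul (R : zmodType) (mul : R -> R -> R) (a b : Rt R) : Rt R :=
  (a.1 * b.1, b.2 *~ a.1 + a.2 *~ b.1 + mul a.2 b.2).

Definition rt_lact (R N : zmodType) (act : R -> N -> N) (a : Rt R) (x : N) : N :=
  x *~ a.1 + act a.2 x.

Definition rt_ract (R : zmodType) (mul : R -> R -> R) (r : R) (a : Rt R) : R :=
  r *~ a.1 + mul r a.2.

(* Tensor products A (x)_S B as the free abelian group on A x B (presented by
   formal terms modulo the abelian group laws) modulo biadditivity and
   balancedness.  A is given by a ternary "sum" relation and a right-action
   relation (so that A may itself be a quotient), B is a Z-module with a left
   S-action. *)
Section Tensor.
Variables (A : Type) (B : zmodType) (S : Type).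
Variables (addA : A -> A -> A -> Prop)    (* addA a a' a''  :  a'' = a + a' *)
          (actA : A -> S -> A -> Prop)    (* actA a s a'    :  a' = a . s   *)
          (actB : S -> B -> B).

Inductive tterm : Type :=
  | tzero : tterm
  | tpure : A -> B -> tterm
  | tadd : tterm -> tterm -> tterm
  | topp : tterm -> tterm.

Inductive teq : tterm -> tterm -> Prop :=
  | teq_refl t : teq t t
  | teq_sym t u : teq t u -> teq u t
  | teq_trans t u v : teq t u -> teq u v -> teq t v
  | teq_addc t t' u u' : teq t t' -> teq u u' -> teq (tadd t u) (tadd t' u')
  | teq_oppc t t' : teq t t' -> teq (topp t) (topp t')
  | teq_addA t u v : teq (tadd t (tadd u v)) (tadd (tadd t u) v)
  | teq_addC t u : teq (tadd t u) (tadd u t)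
  | teq_add0 t : teq (tadd tzero t) t
  | teq_addN t : teq (tadd (topp t) t) tzero
  | teq_linl a a' a'' b : addA a a' a'' ->
      teq (tpure a'' b) (tadd (tpure a b) (tpure a' b))
  | teq_linr a b b' : teq (tpure a (b + b')) (tadd (tpure a b) (tpure a b'))
  | teq_bal a s a' b : actA a s a' -> teq (tpure a' b) (tpure a (actB s b)).

Definition tensor_zero : Prop := forall t, teq t tzero.

End Tensor.

Arguments tzero {A B}.

Fixpoint tmap (A A' : Type) (B : zmodType) (f : A -> A') (t : tterm A B)
  : tterm A' B :=
  match t with
  | tzero => tzero
  | tpure a b => tpure (f a) b
  | tadd t u => tadd (tmap f t) (tmap f u)
  | topp t => topp (tmap f t)
  end.

Definition zadd (A : zmodType) (a a' a'' : A) : Prop := a'' = a + a'.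
Definition zact (A : zmodType) (S : Type) (ract : A -> S -> A) (a : A) (s : S) (a' : A)
  : Prop := a' = ract a s.

Definition tensor_R_zero (R N : zmodType) (mul : R -> R -> R) (act : R -> N -> N) :=
  tensor_zero (@zadd R) (zact mul) act.
Definition tensor_Rt_zero (R N : zmodType) (mul : R -> R -> R) (act : R -> N -> N) :=
  tensor_zero (@zadd R) (zact (rt_ract mul)) (rt_lact act).

(* t-unital: the multiplication map R (x)_R R -> R is an isomorphism.         *)
Fixpoint teval (R : zmodType) (mul : R -> R -> R) (t : tterm R R) : R :=
  match t with
  | tzero => 0
  | tpure a b => mul a b
  | tadd t u => teval mul t + teval mul u
  | topp t => - teval mul t
  end.

Definition t_unital (R : zmodType) (mul : R -> R -> R) : Prop :=
  (* well defined (automatic from ring axioms, included for completeness) *)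
  (forall t u, teq (@zadd R) (zact mul) mul t u -> teval mul t = teval mul u) /\
  (forall t u, teval mul t = teval mul u -> teq (@zadd R) (zact mul) mul t u) /\
  (forall r, exists t, teval mul t = r).

Definition hom_R_zero (R N : zmodType) (mul : R -> R -> R) (act : R -> N -> N) :=
  forall f : R -> N, zmod_morphism f -> (forall r s, f (mul r s) = act r (f s)) ->
    forall r, f r = 0.

Definition rt_lact_R (R : zmodType) (mul : R -> R -> R) (a : Rt R) (r : R) : R :=
  r *~ a.1 + mul a.2 r.

Definition hom_Rt_zero (R N : zmodType) (mul : R -> R -> R) (act : R -> N -> N) :=
  forall f : R -> N, zmod_morphism f ->
    (forall (a : Rt R) r, f (rt_lact_R mul a r) = rt_lact act a (f r)) ->
    forall r, f r = 0.

(* Tor_1^Rt(R, N), computed from the free presentation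
      0 -> K -> F -> R -> 0
   of the right Rt-module R, where F is the free right Rt-module on the set R
   (elements: finite formal sums  sum_i e_{r_i} a_i, represented by lists of
   pairs (r_i, a_i) up to equality of coefficients), F -> R is
   e_r a |-> r . a, and K is its kernel.  Then
      Tor_1^Rt(R, N) = ker (K (x)_Rt N -> F (x)_Rt N).                      *)
Section Tor.
Variables (R : zmodType) (mul : R -> R -> R).

Definition Fel := seq (R * Rt R).

Definition Fcoef (f : Fel) (r : R) : Rt R :=
  ((\sum_(p <- f | p.1 == r) p.2.1)%R, \sum_(p <- f | p.1 == r) p.2.2).

Definition Feq (f g : Fel) : Prop := forall r, Fcoef f r = Fcoef g r.

Definition Fadd (f g h : Fel) : Prop := Feq h (f ++ g).

Definition Fscale (f : Fel) (a : Rt R) : Fel :=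
  [seq (p.1, rt_mul mul p.2 a) | p <- f].

Definition Fact (f : Fel) (a : Rt R) (g : Fel) : Prop := Feq g (Fscale f a).

Definition Feps (f : Fel) : R := \sum_(p <- f) rt_ract mul p.1 p.2.

Definition Kel := {f : Fel | Feps f = 0}.

Definition Kadd (k k' k'' : Kel) : Prop := Fadd (sval k) (sval k') (sval k'').
Definition Kact (k : Kel) (a : Rt R) (k' : Kel) : Prop := Fact (sval k) a (sval k').

Definition Tor1_Rt_zero (N : zmodType) (act : R -> N -> N) : Prop :=
  forall t : tterm Kel N,
    teq Fadd Fact (rt_lact act) (tmap (fun k : Kel => sval k) t) tzero ->
    teq Kadd Kact (rt_lact act) t tzero.

End Tor.

(* Ext^1_Rt(R, N) = 0, with Ext^1 in Yoneda's description: every extension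
     0 -> N -> E -> R -> 0  of left Rt-modules splits.
   (Left Rt-modules = unital Rt-modules = left R-modules E with the action
   (n, r) . e = n e + r e.)                                                  *)
Definition Ext1_Rt_zero (R N : zmodType) (mul : R -> R -> R) (act : R -> N -> N)
  : Prop :=
  forall (E : zmodType) (actE : R -> E -> E), lmod_axioms mul actE ->
  forall (i : N -> E) (p : E -> R),
    zmod_morphism i -> (forall a x, i (rt_lact act a x) = rt_lact actE a (i x)) ->
    zmod_morphism p -> (forall a e, p (rt_lact actE a e) = rt_lact_R mul a (p e)) ->
    injective i -> (forall r, exists e, p e = r) ->
    (forall e, p e = 0 <-> exists x, i x = e) ->
    exists s : R -> E,
      [/\ zmod_morphism s, (forall a r, s (rt_lact_R mul a r) = rt_lact actE a (s r))
        & forall r, p (s r) = r].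

(* Since R is t-unital, multiplication identifies R ⊗_R R with R; in particular
   products generate R.  Everything vanishes because R kills N: rs ⊗ n = r ⊗ sn = 0
   and f (rs) = r f(s) = 0 for R-linear f.
   For Ext, R acts on the middle term E of an extension 0 → N → E → R → 0 through
   E → R, so (a, b) ↦ a·ẽ, with ẽ any lift of b, is a balanced map R × R → E; it
   factors through R ⊗_R R ≅ R and splits the extension.
   For Tor, present R by the free module F on the set R, with kernel K.  As Rt acts
   on N through the augmentation Rt → Z, F ⊗ N ≅ N^(R) and K ⊗ N ≅ (K/KR) ⊗_Z N.
   An element of K without integer coefficients is, via R ⊗_R R ≅ R, a relation
   of R ⊗_R R, and the generating relations lie in KR.  So K/KR is free on the
   classes of e_r - (a lift of r to R ⊗_R R), which map to the standard basis of
   Z^(R), and K ⊗ N → F ⊗ N is injective. *)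

From mathcomp Require Import all_boot all_order all_algebra.
From Stdlib Require Import Setoid Morphisms IndefiniteDescription.
Set Implicit Arguments. Unset Strict Implicit. Unset Printing Implicit Defensive.
Import GRing.Theory.
Local Open Scope ring_scope.

Section AdditiveFun.
Variables (U V : zmodType) (f : U -> V).
Hypothesis fD : {morph f : x y / x + y}.

Lemma morph0 : f 0 = 0.
Proof. by apply: (addrI (f 0)); rewrite -fD !addr0. Qed.

Lemma morphN : {morph f : x / - x}.
Proof. by move=> x; apply: (addrI (f x)); rewrite -fD !subrr morph0. Qed.

Lemma morph_zmod : zmod_morphism f.
Proof. by move=> x y; rewrite fD morphN. Qed.

Lemma morphMz x n : f (x *~ n) = f x *~ n.
Proof.
have fMn m : f (x *+ m) = f x *+ m.
  by elim: m => [|m IHm]; rewrite ?morph0 // !mulrS fD IHm.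
by case: n => m; rewrite ?NegzE ?mulrNz ?morphN fMn.
Qed.

End AdditiveFun.

Lemma zmod_morphismD (U V : zmodType) (f : U -> V) :
  zmod_morphism f -> {morph f : x y / x + y}.
Proof.
move=> fB x y; have f0 : f 0 = 0 by rewrite -(subrr (0 : U)) fB subrr.
have fN z : f (- z) = - f z by rewrite -[- z]sub0r fB f0 sub0r.
by rewrite -{1}[y]opprK fB fN opprK.
Qed.

Lemma big_undup_fst (I X : eqType) (V : Type) (idx : V) (op : Monoid.com_law idx)
    (G : I * X -> V) (s : seq (I * X)) :
  \big[op/idx]_(q <- s) G q =
  \big[op/idx]_(i <- undup (map fst s)) \big[op/idx]_(q <- s | q.1 == i) G q.
Proof.
under [RHS]eq_bigr do rewrite big_mkcond; rewrite exchange_big /=.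
apply: eq_big_seq => q qs; have qU : q.1 \in undup (map fst s).
  by rewrite mem_undup (map_f fst qs).
rewrite (bigD1_seq _ qU (undup_uniq _)) eqxx big1 ?Monoid.mulm1 // => i.
by rewrite eq_sym => /negbTE ->.
Qed.

(** * Formal tensor terms *)

Arguments teq_refl {A B S addA actA actB} t.
Arguments teq_sym {A B S addA actA actB t u}.
Arguments teq_trans {A B S addA actA actB t u v}.
Arguments teq_addc {A B S addA actA actB t t' u u'}.
Arguments teq_oppc {A B S addA actA actB t t'}.
Arguments teq_addA {A B S addA actA actB} t u v.
Arguments teq_addC {A B S addA actA actB} t u.
Arguments teq_add0 {A B S addA actA actB} t.
Arguments teq_addN {A B S addA actA actB} t.
Arguments teq_linl {A B S addA actA actB a a' a''} b.
Arguments teq_linr {A B S addA actA actB} a b b'.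
Arguments teq_bal {A B S addA actA actB a s a'} b.
#[export] Hint Resolve teq_refl : core.

Section TensorTerms.
Variables (A : Type) (B : zmodType).
Implicit Types (t u : tterm A B).

Fixpoint tfold (V : zmodType) (h : A -> B -> V) t : V :=
  match t with
  | tzero => 0
  | tpure a b => h a b
  | tadd t u => tfold h t + tfold h u
  | topp t => - tfold h t
  end.

Lemma eq_tfold (V : zmodType) (h h' : A -> B -> V) : h =2 h' -> tfold h =1 tfold h'.
Proof. by move=> hh'; elim=> //= [t -> u ->|t ->]. Qed.

Lemma morph_tfold (V W : zmodType) (g : V -> W) (h : A -> B -> V) :
  {morph g : x y / x + y} -> forall t, g (tfold h t) = tfold (fun a b => g (h a b)) t.
Proof.
by move=> gD; elim=> /= [|//|t <- u <-|t <-]; rewrite ?morph0 ?gD ?(morphN gD).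
Qed.

Definition tsum (s : seq (tterm A B)) : tterm A B := foldr (@tadd A B) tzero s.

End TensorTerms.

Lemma tfold_tmap (A A' : Type) (B V : zmodType) (f : A' -> A) (h : A -> B -> V)
    (t : tterm A' B) :
  tfold h (tmap f t) = tfold (fun a b => h (f a) b) t.
Proof. by elim: t => //= [t -> u ->|t ->]. Qed.

Section TensorRelations.
Context {A : Type} {B : zmodType} {S : Type}.
Context {addA : A -> A -> A -> Prop} {actA : A -> S -> A -> Prop} {actB : S -> B -> B}.
Local Notation "t ≈ u" := (teq addA actA actB t u) (at level 70).
Implicit Types (t u : tterm A B).

#[export] Instance teq_Equivalence : Equivalence (teq addA actA actB).
Proof. by split=> [t|t u|t u v]; [exact: teq_refl | exact: teq_sym | exact: teq_trans]. Qed.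

#[export] Instance tadd_Proper :
  Proper (teq addA actA actB ==> teq addA actA actB ==> teq addA actA actB) (@tadd A B).
Proof. by move=> ? ? ? ? ? ?; apply: teq_addc. Qed.

#[export] Instance topp_Proper :
  Proper (teq addA actA actB ==> teq addA actA actB) (@topp A B).
Proof. by move=> ? ? ?; apply: teq_oppc. Qed.

Lemma teq_addr0 t : tadd t tzero ≈ t.
Proof. by rewrite teq_addC teq_add0. Qed.

Lemma teq_addrN t : tadd t (topp t) ≈ tzero.
Proof. by rewrite teq_addC teq_addN. Qed.

Lemma teq_oppU t u : tadd t u ≈ tzero -> u ≈ topp t.
Proof.
by move=> tu0; rewrite -[u]teq_add0 -(teq_addN t) -teq_addA tu0 teq_addr0.
Qed.

Lemma teq_opp0 : topp (tzero : tterm A B) ≈ tzero.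
Proof. by symmetry; apply: teq_oppU; rewrite teq_add0. Qed.

Lemma teq_oppD t u : topp (tadd t u) ≈ tadd (topp t) (topp u).
Proof.
symmetry; apply: teq_oppU.
rewrite [tadd (topp t) _]teq_addC teq_addA -[tadd (tadd t u) _]teq_addA.
by rewrite teq_addrN teq_addr0 teq_addrN.
Qed.

Lemma teq_double_eq0 t : t ≈ tadd t t -> t ≈ tzero.
Proof. by move=> tt; rewrite -[t]teq_addr0 -(teq_addrN t) teq_addA -tt teq_addrN. Qed.

Lemma teq_pure0 a : tpure a 0 ≈ tzero.
Proof. by apply: teq_double_eq0; rewrite -teq_linr addr0. Qed.

Lemma teq_pureN a b : tpure a (- b) ≈ topp (tpure a b).
Proof. by apply: teq_oppU; rewrite -teq_linr subrr teq_pure0. Qed.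

Lemma tsum_cat s1 s2 : tsum (s1 ++ s2) ≈ tadd (tsum s1) (tsum s2).
Proof. by elim: s1 => [|t s IHs] /=; rewrite ?teq_add0 // IHs teq_addA. Qed.

Lemma tsum_opp s : topp (tsum s) ≈ tsum (map (@topp A B) s).
Proof. by elim: s => [|t s IHs] /=; rewrite ?teq_opp0 // teq_oppD IHs. Qed.

Lemma eq_tsum (I : eqType) (F G : I -> tterm A B) (s : seq I) :
  {in s, forall i, F i ≈ G i} -> tsum (map F s) ≈ tsum (map G s).
Proof.
elim: s => [|i s IHs] FG //=; rewrite FG ?mem_head // IHs //.
by move=> j js; apply: FG; rewrite inE js orbT.
Qed.

Lemma tsum_pure (I : Type) a (F : I -> B) (s : seq I) :
  tsum [seq tpure a (F i) | i <- s] ≈ tpure a (\sum_(i <- s) F i).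
Proof.
elim: s => [|i s IHs] /=; first by rewrite big_nil teq_pure0.
by rewrite big_cons teq_linr IHs.
Qed.

Lemma tsum_filterC (I : Type) (F : I -> tterm A B) (P : pred I) (s : seq I) :
  tsum (map F s) ≈ tadd (tsum (map F (filter P s))) (tsum (map F (filter (predC P) s))).
Proof.
elim: s => [|i s IHs] /=; first by rewrite teq_add0.
case: (P i) => /=; rewrite IHs; first exact: teq_addA.
by rewrite teq_addA [tadd (F i) _]teq_addC -teq_addA.
Qed.

Lemma tsum_grouped_eq0 (I : eqType) (a : I -> A) (s : seq (I * B)) :
  (forall i, \sum_(q <- s | q.1 == i) q.2 = 0) ->
  tsum [seq tpure (a q.1) q.2 | q <- s] ≈ tzero.
Proof.
elim: {s}(size s) {-2}s (leqnn (size s)) => [|n IHn] [|[i x] s] // size_s s0.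
rewrite (tsum_filterC _ (fun q => q.1 == i)).
rewrite (@eq_tsum _ _ (fun q => tpure (a i) q.2)); last first.
  by move=> q; rewrite mem_filter => /andP[/eqP->].
rewrite tsum_pure big_filter s0 teq_pure0 teq_add0 IHn //.
  by rewrite /= eqxx /= size_filter (leq_trans (count_size _ _)).
move=> j; rewrite big_filter_cond; case: (eqVneq j i) => [->|ji].
  by rewrite big_pred0 // => q; rewrite andNb.
rewrite -[RHS](s0 j); apply: eq_bigl => q /=.
by case: (eqVneq q.1 j) => [->|]; rewrite ?andbT ?andbF.
Qed.

Lemma tfold_teq (V : zmodType) (h : A -> B -> V) :
  (forall a a' a'' b, addA a a' a'' -> h a'' b = h a b + h a' b) ->
  (forall a, {morph h a : b b' / b + b'}) ->
  (forall a s a' b, actA a s a' -> h a' b = h a (actB s b)) ->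
  forall t u, t ≈ u -> tfold h t = tfold h u.
Proof.
move=> hDl hDr hbal t u.
elim=> {t u} //= [t u v _ -> _ -> // | t t' u u' _ -> _ -> // | t t' _ -> // |
  t u v | t u | t | t].
- exact: addrA.
- exact: addrC.
- exact: add0r.
- exact: addNr.
Qed.

End TensorRelations.

Section LeftZmodTensor.
Context {A B : zmodType} {S : Type} {actA : A -> S -> A -> Prop} {actB : S -> B -> B}.
Local Notation "t ≈ u" := (teq (@zadd A) actA actB t u) (at level 70).

Lemma teq_pureDl a a' b : tpure (a + a') b ≈ tadd (tpure a b) (tpure a' b).
Proof. exact: teq_linl. Qed.

Lemma teq_pure0l b : tpure 0 b ≈ tzero.
Proof. by apply: teq_double_eq0; rewrite -teq_pureDl addr0. Qed.

Lemma teq_pureNl a b : tpure (- a) b ≈ topp (tpure a b).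
Proof. by apply: teq_oppU; rewrite -teq_pureDl subrr teq_pure0l. Qed.

End LeftZmodTensor.

(** * Nonunital rings and t-unitality *)

Section NonunitalRing.
Variables (R : zmodType) (mul : R -> R -> R).
Hypothesis mulR : nu_ring_axioms mul.
Local Notation teqR := (teq (@zadd R) (zact mul) mul).

Lemma nmulrA x y z : mul x (mul y z) = mul (mul x y) z.
Proof. by case: mulR => mulA _ _; apply: mulA. Qed.

Lemma nmulrDl y : {morph mul^~ y : x x' / x + x'}.
Proof. by case: mulR => _ mulDl _ x x'; apply: mulDl. Qed.

Lemma nmulrDr x : {morph mul x : y y' / y + y'}.
Proof. by case: mulR => _ _ mulDr y y'; apply: mulDr. Qed.

Lemma nmul0r y : mul 0 y = 0. Proof. exact: morph0 (nmulrDl y). Qed.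
Lemma nmulr0 x : mul x 0 = 0. Proof. exact: morph0 (nmulrDr x). Qed.
Lemma nmulNr x y : mul (- x) y = - mul x y. Proof. exact: (morphN (nmulrDl y) x). Qed.
Lemma nmulrN x y : mul x (- y) = - mul x y. Proof. exact: (morphN (nmulrDr x) y). Qed.

Definition balanced (V : zmodType) (h : R -> R -> V) : Prop :=
  [/\ forall b, {morph h^~ b : a a' / a + a'},
      forall a, {morph h a : b b' / b + b'} &
      forall a s b, h (mul a s) b = h a (mul s b)].

Lemma tfold_balanced (V : zmodType) (h : R -> R -> V) :
  balanced h -> forall t u, teqR t u -> tfold h t = tfold h u.
Proof.
case=> hDl hDr hA; apply: tfold_teq => // [a a' _ b ->|a s _ b ->//].
exact: hDl.
Qed.

Lemma teval_tfold t : teval mul t = tfold mul t.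
Proof. by elim: t => //= [t -> u ->|t ->]. Qed.

Lemma teval_teq t u : teqR t u -> teval mul t = teval mul u.
Proof.
rewrite !teval_tfold; apply: tfold_balanced; split=> [b|a|a s b].
- exact: nmulrDl.
- exact: nmulrDr.
- by rewrite nmulrA.
Qed.

Lemma teval_tmap_mul z t : teval mul (tmap (mul z) t) = mul z (teval mul t).
Proof.
rewrite !teval_tfold tfold_tmap (morph_tfold _ (nmulrDr z)).
by apply: eq_tfold => a b; rewrite nmulrA.
Qed.

End NonunitalRing.

Section SurjectiveMultiplication.
Variables (R : zmodType) (mul : R -> R -> R).
Hypothesis mul_onto : forall r, exists t, teval mul t = r.

Lemma tensor_zero_of_pure_mul (B : zmodType) (S : Type)
    (actA : R -> S -> R -> Prop) (actB : S -> B -> B) :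
  (forall x y b, teq (@zadd R) actA actB (tpure (mul x y) b) tzero) ->
  tensor_zero (@zadd R) actA actB.
Proof.
move=> mul_pure0; have pure0 (t : tterm R R) b :
    teq (@zadd R) actA actB (tpure (teval mul t) b) tzero.
  elim: t => /= [|x y|t IHt u IHu|t IHt] //; first exact: teq_pure0l.
  - by rewrite teq_pureDl IHt IHu teq_add0.
  - by rewrite teq_pureNl IHt teq_opp0.
elim=> [|a b|t IHt u IHu|t IHt]; first by [].
- by have [t <-] := mul_onto a; apply: pure0.
- by rewrite IHt IHu teq_add0.
- by rewrite IHt teq_opp0.
Qed.

Lemma hom_eq0_of_mul (V : zmodType) (f : R -> V) :
  zmod_morphism f -> (forall x y, f (mul x y) = 0) -> forall r, f r = 0.
Proof.
move=> /zmod_morphismD fD fmul0 r; have [t <-] := mul_onto r.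
rewrite teval_tfold morph_tfold //.
by elim: t => //= [t -> u ->|t ->]; rewrite ?addr0 ?oppr0.
Qed.

End SurjectiveMultiplication.

Lemma rt_lact_null (R N : zmodType) (act : R -> N -> N) :
  null_module act -> forall a x, rt_lact act a x = x *~ a.1.
Proof. by move=> nullN a x; rewrite /rt_lact nullN addr0. Qed.

Section NullModule.
Variables (R : zmodType) (mul : R -> R -> R) (N : zmodType) (act : R -> N -> N).
Hypotheses (mul_onto : forall r, exists t, teval mul t = r) (nullN : null_module act).

Lemma tensor_R_zero_null : tensor_R_zero mul act.
Proof.
apply: (tensor_zero_of_pure_mul mul_onto) => x y b.
have xy : zact mul x y (mul x y) by [].
by rewrite (teq_bal b xy) nullN teq_pure0.
Qed.

Lemma tensor_Rt_zero_null : tensor_Rt_zero mul act.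
Proof.
apply: (tensor_zero_of_pure_mul mul_onto) => x y b.
have xy : zact (rt_ract mul) x (0, y) (mul x y) by rewrite /zact /rt_ract mulr0z add0r.
by rewrite (teq_bal b xy) rt_lact_null // mulr0z teq_pure0.
Qed.

Lemma hom_R_zero_null : hom_R_zero mul act.
Proof.
by move=> f fB f_lin; apply: (hom_eq0_of_mul mul_onto fB) => x y; rewrite f_lin nullN.
Qed.

Lemma hom_Rt_zero_null : hom_Rt_zero mul act.
Proof.
move=> f fB f_lin; apply: (hom_eq0_of_mul mul_onto fB) => x y.
by have := f_lin (0, x) y; rewrite /rt_lact_R rt_lact_null //= !mulr0z add0r.
Qed.

End NullModule.

Lemma t_unital_descent (R : zmodType) (mul : R -> R -> R) (V : zmodType)
    (h : R -> R -> V) :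
  t_unital mul -> balanced mul h ->
  exists2 phi : R -> V, {morph phi : x y / x + y} &
    forall t, phi (teval mul t) = tfold h t.
Proof.
case=> _ [mul_inj mul_onto] hbal.
have [rep repE] := functional_choice _ mul_onto.
have phiE t : tfold h (rep (teval mul t)) = tfold h t.
  by apply: tfold_balanced hbal _ _ _; apply: mul_inj; rewrite repE.
exists (fun r => tfold h (rep r)) => [x y|t]; last exact: phiE.
by rewrite -{1}(repE x) -{1}(repE y) -[_ + _]/(teval mul (tadd _ _)) phiE.
Qed.

(** * Ext *)

Section Ext.
Variables (R : zmodType) (mul : R -> R -> R) (N : zmodType) (act : R -> N -> N).
Hypotheses (mulR : nu_ring_axioms mul) (tuR : t_unital mul) (nullN : null_module act).

Section Splitting.
Variables (E : zmodType) (actE : R -> E -> E) (i : N -> E) (p : E -> R).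
Hypotheses (modE : lmod_axioms mul actE) (i_add : zmod_morphism i)
  (i_lin : forall a x, i (rt_lact act a x) = rt_lact actE a (i x))
  (p_add : zmod_morphism p)
  (p_lin : forall a e, p (rt_lact actE a e) = rt_lact_R mul a (p e))
  (p_onto : forall r, exists e, p e = r)
  (ker_p : forall e, p e = 0 <-> exists x, i x = e).

Let actEA z y e : actE (mul z y) e = actE z (actE y e).
Proof. by case: modE. Qed.

Let actED z : {morph actE z : e e' / e + e'}.
Proof. by case: modE => _ _ actDr e e'; apply: actDr. Qed.

Let actEDl e : {morph actE^~ e : z z' / z + z'}.
Proof. by case: modE => _ actDl _ z z'; apply: actDl. Qed.

Lemma actE_image_i z x : actE z (i x) = 0.
Proof.
have := i_lin (0, z) x; rewrite rt_lact_null // /rt_lact /= !mulr0z add0r => <-.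
exact: morph0 (zmod_morphismD i_add).
Qed.

Lemma actE_fiber z e e' : p e = p e' -> actE z e = actE z e'.
Proof.
move=> pee'; have [|x ix] := (ker_p (e - e')).1; first by rewrite p_add pee' subrr.
by rewrite -[e](subrK e') -ix actED actE_image_i add0r.
Qed.

Lemma p_actE z e : p (actE z e) = mul z (p e).
Proof. by have := p_lin (0, z) e; rewrite /rt_lact /rt_lact_R /= !mulr0z !add0r. Qed.

Lemma ext_splitting : exists s : R -> E,
  [/\ zmod_morphism s, forall a r, s (rt_lact_R mul a r) = rt_lact actE a (s r)
    & forall r, p (s r) = r].
Proof.
have [lift liftK] := functional_choice _ p_onto.
pose g a b := actE a (lift b).
have g_bal : balanced mul g.
  split=> [b a a'|a b b'|a y b]; rewrite /g.
  - exact: actEDl.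
  - by rewrite -actED; apply: actE_fiber; rewrite (zmod_morphismD p_add) !liftK.
  - by rewrite actEA; apply: actE_fiber; rewrite p_actE !liftK.
have [s sD sE] := t_unital_descent tuR g_bal.
have [_ [_ mul_onto]] := tuR.
exists s; split=> [|[n z] r|r]; first exact: morph_zmod.
- rewrite /rt_lact_R /rt_lact /= sD (morphMz sD); congr (_ + _).
  have [w <-] := mul_onto r.
  rewrite -(teval_tmap_mul mulR) !sE tfold_tmap (morph_tfold _ (actED z)).
  by apply: eq_tfold => a b; rewrite /g actEA.
- have [t <-] := mul_onto r.
  rewrite sE (morph_tfold _ (zmod_morphismD p_add)) teval_tfold.
  by apply: eq_tfold => a b; rewrite /g p_actE liftK.
Qed.

End Splitting.

Lemma Ext1_Rt_zero_null : Ext1_Rt_zero mul act.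
Proof.
by move=> E actE modE i p iB i_lin pB p_lin _ p_onto ker_p; apply: ext_splitting.
Qed.

End Ext.

(** * The free presentation of R *)

Section FreeModule.
Variables (R : zmodType) (mul : R -> R -> R).
Hypothesis mulR : nu_ring_axioms mul.
Implicit Types (f g : Fel R) (r : R).

Lemma FcoefE f r : Fcoef f r = \sum_(q <- f | q.1 == r) q.2.
Proof.
rewrite /Fcoef -(raddf_sum fst) -[X in (_, X)](raddf_sum snd).
by case: (\sum_(_ <- f | _) _).
Qed.

Definition Fopp f : Fel R := [seq (q.1, - q.2) | q <- f].

Lemma Fcoef_nil r : Fcoef [::] r = 0.
Proof. by rewrite FcoefE big_nil. Qed.

Lemma Fcoef_cons q f r : Fcoef (q :: f) r = (if q.1 == r then q.2 else 0) + Fcoef f r.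
Proof. by rewrite !FcoefE big_cons; case: ifP; rewrite ?add0r. Qed.

Lemma Fcoef_cat f g r : Fcoef (f ++ g) r = Fcoef f r + Fcoef g r.
Proof. by rewrite !FcoefE big_cat. Qed.

Lemma Fcoef_opp f r : Fcoef (Fopp f) r = - Fcoef f r.
Proof. by rewrite !FcoefE big_map sumrN. Qed.

Definition Fcoefz f r : int := \sum_(q <- f | q.1 == r) q.2.1.

Lemma Feq_Fcoefz f g : Feq f g -> Fcoefz f =1 Fcoefz g.
Proof. by move=> fg r; have := fg r; case. Qed.

Lemma Fcoefz_nil r : Fcoefz [::] r = 0.
Proof. exact: big_nil. Qed.

Lemma Fcoefz_cons q f r : Fcoefz (q :: f) r = (if q.1 == r then q.2.1 else 0) + Fcoefz f r.
Proof. by rewrite /Fcoefz big_cons; case: ifP; rewrite ?add0r. Qed.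

Lemma Fcoefz_cat f g r : Fcoefz (f ++ g) r = Fcoefz f r + Fcoefz g r.
Proof. exact: big_cat. Qed.

Lemma Fcoefz_opp f r : Fcoefz (Fopp f) r = - Fcoefz f r.
Proof. by rewrite /Fcoefz big_map sumrN. Qed.

Lemma Fcoefz_scale f a r : Fcoefz (Fscale mul f a) r = Fcoefz f r * a.1.
Proof. by rewrite /Fcoefz big_map mulr_suml. Qed.

Lemma rt_ractDr r : {morph rt_ract mul r : a b / a + b}.
Proof.
move=> a b; rewrite /rt_ract /= mulrzDr (nmulrDr mulR).
by rewrite addrACA.
Qed.

Lemma Feps_cat f g : Feps mul (f ++ g) = Feps mul f + Feps mul g.
Proof. exact: big_cat. Qed.

Lemma Feps_opp f : Feps mul (Fopp f) = - Feps mul f.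
Proof.
rewrite /Feps big_map -sumrN; apply: eq_bigr => q _.
exact: (morphN (rt_ractDr q.1)).
Qed.

Lemma Feps_Fcoef f :
  Feps mul f = \sum_(r <- undup (map fst f)) rt_ract mul r (Fcoef f r).
Proof.
rewrite /Feps big_undup_fst; apply: eq_bigr => r _.
rewrite FcoefE (big_morph _ (rt_ractDr r) (morph0 (rt_ractDr r))).
by apply: eq_bigr => q /eqP ->.
Qed.

Lemma Feps_Feq f g : Feq f g -> Feps mul f = Feps mul g.
Proof.
move=> fg; apply/eqP; rewrite -subr_eq0 -Feps_opp -Feps_cat Feps_Fcoef.
by rewrite big1 // => r _; rewrite Fcoef_cat Fcoef_opp fg subrr (morph0 (rt_ractDr r)).
Qed.

End FreeModule.

(** * Tor *)

Section Tor.
Variables (R : zmodType) (mul : R -> R -> R) (N : zmodType) (act : R -> N -> N).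
Hypotheses (mulR : nu_ring_axioms mul) (tuR : t_unital mul) (nullN : null_module act).

Local Notation F := (Fel R).
Local Notation K := (Kel mul).
Local Notation "t ≈ u" :=
  (teq (@Kadd R mul) (@Kact R mul) (rt_lact act) t u) (at level 70).
Local Notation teqR := (teq (@zadd R) (zact mul) mul).
Implicit Types (f g : F) (k : K) (x : N).

Lemma rt_mul_pure n s b : rt_mul mul (n, s) (0, b) = (0, b *~ n + mul s b).
Proof. by rewrite /rt_mul /= mulr0 mulr0z addr0. Qed.

Lemma pair0D (b b' : R) : ((0 : int), b + b') = (0, b) + (0, b').
Proof. by congr pair; rewrite addr0. Qed.

Lemma pair0N (b : R) : ((0 : int), - b) = - (0, b).
Proof. by congr pair; rewrite oppr0. Qed.

Lemma Feq_sym f g : Feq f g -> Feq g f.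
Proof. by move=> fg r; rewrite fg. Qed.

Lemma Feps_scalez f n : Feps mul (Fscale mul f (n, 0)) = Feps mul f *~ n.
Proof.
rewrite /Feps big_map mulrz_suml; apply: eq_bigr => q _.
rewrite /rt_ract /= mul0rz add0r (nmulr0 mulR) addr0.
by rewrite (morphMz (nmulrDr mulR q.1)) mulrzDl mulrzA.
Qed.

Lemma Kzero_subproof : Feps mul [::] = 0. Proof. exact: big_nil. Qed.
Definition Kzero : K := exist _ [::] Kzero_subproof.

Lemma Kcat_subproof k k' : Feps mul (sval k ++ sval k') = 0.
Proof. by rewrite Feps_cat (proj2_sig k) (proj2_sig k') addr0. Qed.
Definition Kcat k k' : K := exist _ _ (Kcat_subproof k k').

Lemma Kopp_subproof k : Feps mul (Fopp (sval k)) = 0.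
Proof. by rewrite (Feps_opp mulR) (proj2_sig k) oppr0. Qed.
Definition Kopp k : K := exist _ _ (Kopp_subproof k).

Lemma Kscalez_subproof k n : Feps mul (Fscale mul (sval k) (n, 0)) = 0.
Proof. by rewrite Feps_scalez (proj2_sig k) mul0rz. Qed.
Definition Kscalez k n : K := exist _ _ (Kscalez_subproof k n).

Lemma pure_Kadd k1 k2 k x :
  Feq (sval k) (sval k1 ++ sval k2) -> tpure k x ≈ tadd (tpure k1 x) (tpure k2 x).
Proof. exact: teq_linl. Qed.

Lemma pure_Kact k a k' x :
  Feq (sval k') (Fscale mul (sval k) a) -> tpure k' x ≈ tpure k (x *~ a.1).
Proof. by move=> kk'; rewrite -(rt_lact_null nullN); apply: teq_bal. Qed.

Lemma pure_Kzero x : tpure Kzero x ≈ tzero.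
Proof. by apply: teq_double_eq0; apply: teq_linl. Qed.

Lemma pure_Feq k k' x : Feq (sval k) (sval k') -> tpure k x ≈ tpure k' x.
Proof.
by move=> kk'; rewrite (@pure_Kadd k' Kzero) ?pure_Kzero ?teq_addr0 //= cats0.
Qed.

Definition vanishing x f := forall k, Feq (sval k) f -> tpure k x ≈ tzero.

Lemma vanishing_coef0 x f : Fcoef f =1 (fun=> 0) -> vanishing x f.
Proof.
move=> f0 k kf; rewrite (@pure_Feq k Kzero) ?pure_Kzero //.
by move=> r; rewrite kf f0 Fcoef_nil.
Qed.

Lemma vanishing_Feq x f g : Feq f g -> vanishing x g -> vanishing x f.
Proof. by move=> fg vg k kf; apply: vg => r; rewrite kf fg. Qed.

Lemma vanishing_cat x f g (ef : Feps mul f = 0) (eg : Feps mul g = 0) :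
  vanishing x f -> vanishing x g -> vanishing x (f ++ g).
Proof.
move=> vf vg k kfg; rewrite (@pure_Kadd (exist _ f ef) (exist _ g eg) k x kfg).
by rewrite vf ?vg ?teq_add0.
Qed.

Lemma vanishing_opp x f (ef : Feps mul f = 0) : vanishing x f -> vanishing x (Fopp f).
Proof.
move=> vf k kf; rewrite -(pure_Kzero x).
rewrite (@pure_Kadd k (exist _ f ef) Kzero x) ?(vf (exist _ f ef)) ?teq_addr0 //.
by move=> r /=; rewrite Fcoef_nil Fcoef_cat kf Fcoef_opp addNr.
Qed.

Lemma vanishing_scale x f b (ef : Feps mul f = 0) : vanishing x (Fscale mul f (0, b)).
Proof.
by move=> k kf; rewrite (@pure_Kact (exist _ f ef) (0, b) k x kf) mulr0z teq_pure0.
Qed.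

Fixpoint Ftensor (t : tterm R R) : F :=
  match t with
  | tzero => [::]
  | tpure a b => [:: (a, (0, b))]
  | tadd t u => Ftensor t ++ Ftensor u
  | topp t => Fopp (Ftensor t)
  end.

Lemma Feps_Ftensor t : Feps mul (Ftensor t) = teval mul t.
Proof.
elim: t => /= [|a b|t IHt u IHu|t IHt]; first exact: big_nil.
- by rewrite /Feps big_seq1 /rt_ract /= mulr0z add0r.
- by rewrite Feps_cat IHt IHu.
- by rewrite (Feps_opp mulR) IHt.
Qed.

Lemma Fcoefz_Ftensor t r : Fcoefz (Ftensor t) r = 0.
Proof.
elim: t => /= [|a b|t IHt u IHu|t IHt].
- by rewrite Fcoefz_nil.
- by rewrite Fcoefz_cons Fcoefz_nil addr0; case: ifP.
- by rewrite Fcoefz_cat IHt IHu addr0.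
- by rewrite Fcoefz_opp IHt oppr0.
Qed.

Definition Ftensor_diff t u := Ftensor t ++ Fopp (Ftensor u).

Lemma Fcoef_Ftensor_diff t u r :
  Fcoef (Ftensor_diff t u) r = Fcoef (Ftensor t) r - Fcoef (Ftensor u) r.
Proof. by rewrite Fcoef_cat Fcoef_opp. Qed.

Lemma Feps_Ftensor_diff t u : teqR t u -> Feps mul (Ftensor_diff t u) = 0.
Proof.
by move=> /(teval_teq mulR) tu; rewrite Feps_cat (Feps_opp mulR) !Feps_Ftensor tu subrr.
Qed.

Lemma vanishing_linl x a a' b :
  vanishing x (Ftensor_diff (tpure (a + a') b) (tadd (tpure a b) (tpure a' b))).
Proof.
have e : Feps mul [:: (a + a', (1, 0)); (a, (-1, 0)); (a', (-1, 0))] = 0.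
  rewrite /Feps !big_cons big_nil /rt_ract /= !(nmulr0 mulR) mulr1z !mulrN1z !addr0.
  by rewrite -opprD subrr.
apply: (vanishing_Feq _ (@vanishing_scale x _ b e)) => r; congr Fcoef.
by rewrite /= !rt_mul_pure !(nmul0r mulR) !addr0 mulr1z mulrN1z pair0N.
Qed.

Lemma vanishing_bal x a s b :
  vanishing x (Ftensor_diff (tpure (mul a s) b) (tpure a (mul s b))).
Proof.
have e : Feps mul [:: (mul a s, (1, 0)); (a, (0, - s))] = 0.
  rewrite /Feps !big_cons big_nil /rt_ract /= !(nmulr0 mulR) mulr1z mulr0z !addr0.
  by rewrite add0r (nmulrN mulR) subrr.
apply: (vanishing_Feq _ (@vanishing_scale x _ b e)) => r; congr Fcoef.
by rewrite /= !rt_mul_pure (nmul0r mulR) (nmulNr mulR) mulr1z mulr0z !add0r addr0 pair0N.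
Qed.

Lemma vanishing_teq x t u : teqR t u -> vanishing x (Ftensor_diff t u).
Proof.
elim=> {t u} [t|t u tu IH|t u v tu IHtu uv IHuv|t t' u u' tt' IHt uu' IHu|t t' tt' IHt|
  t u v|t u|t|t|a a' _ b ->|a b b'|a s _ b ->].
- by apply: vanishing_coef0 => r; rewrite Fcoef_Ftensor_diff subrr.
- apply: (@vanishing_Feq _ _ (Fopp (Ftensor_diff t u))).
    by move=> r; rewrite Fcoef_opp !Fcoef_Ftensor_diff opprB.
  exact: vanishing_opp (Feps_Ftensor_diff tu) IH.
- apply: (@vanishing_Feq _ _ (Ftensor_diff t u ++ Ftensor_diff u v)).
    by move=> r; rewrite Fcoef_cat !Fcoef_Ftensor_diff addrA subrK.
  exact: vanishing_cat (Feps_Ftensor_diff tu) (Feps_Ftensor_diff uv) IHtu IHuv.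
- apply: (@vanishing_Feq _ _ (Ftensor_diff t t' ++ Ftensor_diff u u')).
    by move=> r; rewrite Fcoef_cat !Fcoef_Ftensor_diff /= !Fcoef_cat opprD addrACA.
  exact: vanishing_cat (Feps_Ftensor_diff tt') (Feps_Ftensor_diff uu') IHt IHu.
- apply: (@vanishing_Feq _ _ (Fopp (Ftensor_diff t t'))).
    by move=> r; rewrite Fcoef_opp !Fcoef_Ftensor_diff /= !Fcoef_opp opprK opprB addrC.
  exact: vanishing_opp (Feps_Ftensor_diff tt') IHt.
- by apply: vanishing_coef0 => r; rewrite Fcoef_Ftensor_diff /= !Fcoef_cat addrA subrr.
- apply: vanishing_coef0 => r.
  by rewrite Fcoef_Ftensor_diff /= !Fcoef_cat [X in _ - X]addrC subrr.
- by apply: vanishing_coef0 => r; rewrite Fcoef_Ftensor_diff subrr.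
- apply: vanishing_coef0 => r.
  by rewrite Fcoef_Ftensor_diff /= Fcoef_cat Fcoef_opp Fcoef_nil addNr subrr.
- exact: vanishing_linl.
- apply: vanishing_coef0 => r; rewrite /Ftensor_diff /= !Fcoef_cons Fcoef_nil.
  by case: ifP => _; rewrite /= ?addr0 // -opprD -pair0D subrr.
- exact: vanishing_bal.
Qed.

Lemma pure_Fcoefz0 k x : Fcoefz (sval k) =1 (fun=> 0) -> tpure k x ≈ tzero.
Proof.
move=> k0; pose t := tsum [seq tpure q.1 q.2.2 | q <- sval k].
have Ft : Feq (Ftensor t) (sval k).
  have -> : Ftensor t = [seq (q.1, (0, q.2.2)) | q <- sval k].
    by rewrite /t; elim: (sval k) => //= q f ->.
  move=> r; rewrite /Fcoef !big_map; congr pair.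
  by rewrite big1 // -/(Fcoefz _ r) k0.
have [_ [mul_inj _]] := tuR.
have t0 : teqR t tzero.
  by apply: mul_inj; rewrite -Feps_Ftensor (Feps_Feq mulR Ft) (proj2_sig k).
by apply: (vanishing_teq x t0); rewrite /Ftensor_diff /= cats0; apply: Feq_sym.
Qed.

Fixpoint coords (t : tterm K N) : seq (R * N) :=
  match t with
  | tzero => [::]
  | tpure k x => [seq (q.1, x *~ q.2.1) | q <- sval k]
  | tadd t u => coords t ++ coords u
  | topp t => [seq (q.1, - q.2) | q <- coords t]
  end.

Section Expansion.
Variable kbasis : R -> K.
Hypothesis kbasis_coef : forall r s, Fcoefz (sval (kbasis r)) s = if r == s then 1 else 0.

Lemma pure_kbasis_expand k x :
  tpure k x ≈ tsum [seq tpure (kbasis q.1) (x *~ q.2.1) | q <- sval k].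
Proof.
suff expand f k' : Fcoefz (sval k') =1 Fcoefz f ->
    tpure k' x ≈ tsum [seq tpure (kbasis q.1) (x *~ q.2.1) | q <- f] by exact: expand.
elim: f k' => [|q f IHf] k' k'f /=.
  by apply: pure_Fcoefz0 => r; rewrite k'f Fcoefz_nil.
pose kq := Kscalez (kbasis q.1) q.2.1.
rewrite (@pure_Kadd kq (Kcat k' (Kopp kq))); last first.
  by move=> r /=; rewrite !Fcoef_cat Fcoef_opp addrCA subrr addr0.
rewrite (@pure_Kact (kbasis q.1) (q.2.1, 0) kq) // -IHf // => r /=.
rewrite Fcoefz_cat Fcoefz_opp Fcoefz_scale kbasis_coef k'f Fcoefz_cons.
case: (q.1 == r).
  by rewrite mul1r addrAC subrr add0r.
by rewrite mul0r subr0 add0r.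
Qed.

Lemma tsum_coords t :
  t ≈ tsum [seq tpure (kbasis q.1) q.2 | q <- coords t].
Proof.
elim: t => [|k x|t IHt u IHu|t IHt] //=.
- by rewrite -map_comp; apply: pure_kbasis_expand.
- by rewrite map_cat tsum_cat -IHt -IHu.
- rewrite {1}IHt tsum_opp -!map_comp.
  by apply: eq_tsum => q _; rewrite /= teq_pureN.
Qed.

End Expansion.

(* [R] acts by zero on [N], so [F ⊗_Rt N ≅ N^(R)]; this is the [r]-th coordinate. *)
Definition Fcoord (r : R) : tterm F N -> N := tfold (fun f x => x *~ Fcoefz f r).

Lemma Fcoord_teq r t u :
  teq (@Fadd R) (Fact mul) (rt_lact act) t u -> Fcoord r t = Fcoord r u.
Proof.
apply: tfold_teq => [f g h x hfg|f x y|f a g x gfa].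
- by rewrite (Feq_Fcoefz hfg) Fcoefz_cat mulrzDr.
- exact: mulrzDl.
- by rewrite (Feq_Fcoefz gfa) Fcoefz_scale (rt_lact_null nullN) mulrC mulrzA.
Qed.

Lemma sum_coords t r : \sum_(q <- coords t | q.1 == r) q.2 = Fcoord r (tmap sval t).
Proof.
rewrite /Fcoord tfold_tmap; elim: t => [|k x|t IHt u IHu|t IHt] /=.
- exact: big_nil.
- by rewrite big_map /Fcoefz mulrz_sumr.
- by rewrite big_cat IHt IHu.
- by rewrite big_map sumrN IHt.
Qed.

Lemma Feps_kbasis (t : tterm R R) r :
  teval mul t = r -> Feps mul ((r, (1, 0)) :: Fopp (Ftensor t)) = 0.
Proof.
move=> tr; rewrite /Feps big_cons -/(Feps mul _) (Feps_opp mulR) Feps_Ftensor tr.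
by rewrite /rt_ract /= mulr1z (nmulr0 mulR) addr0 subrr.
Qed.

Lemma exists_kbasis : exists kbasis : R -> K,
  forall r s, Fcoefz (sval (kbasis r)) s = if r == s then 1 else 0.
Proof.
have [_ [_ /functional_choice[rep repE]]] := tuR.
exists (fun r => exist (fun f => Feps mul f = 0) _ (Feps_kbasis (repE r))) => r s /=.
by rewrite Fcoefz_cons Fcoefz_opp Fcoefz_Ftensor oppr0 addr0.
Qed.

Lemma Tor1_Rt_zero_null : Tor1_Rt_zero mul act.
Proof.
move=> t tF0; have [kbasis kbasisE] := exists_kbasis.
rewrite (tsum_coords kbasisE t); apply: tsum_grouped_eq0 => r.
by rewrite sum_coords (Fcoord_teq r tF0).
Qed.

End Tor.

Theorem lemma5p5 (R : zmodType) (mul : R -> R -> R) (N : zmodType) (act : R -> N -> N) :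
  nu_ring_axioms mul -> t_unital mul ->
  lmod_axioms mul act -> null_module act ->
  (tensor_R_zero mul act /\ tensor_Rt_zero mul act /\ Tor1_Rt_zero mul act) /\
  (hom_R_zero mul act /\ hom_Rt_zero mul act /\ Ext1_Rt_zero mul act).
Proof.
(* [lmod_axioms] holds trivially for a null module. *)
move=> mulR tuR _ nullN; have [_ [_ mul_onto]] := tuR.
split; split; [|split| |split].
- exact: tensor_R_zero_null mul_onto nullN.
- exact: tensor_Rt_zero_null mul_onto nullN.
- exact: Tor1_Rt_zero_null mulR tuR nullN.
- exact: hom_R_zero_null mul_onto nullN.
- exact: hom_Rt_zero_null mul_onto nullN.
- exact: Ext1_Rt_zero_null mulR tuR nullN.
Qed.
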